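(* Let $\mathcal M=(G,In,Out,Leak)$ be a strongly connected linear compartmental model with $n$ compartments, $In=\{j\}$ and $Out=\{i\}$. Write the input-output equation as $$y_i^{(n)}+c_{n-1}y_i^{(n-1)}+\dots+c_1y_i'+c_0y_i=(-1)^{i+j}\left(d_{n-1}u_j^{(n-1)}+\dots+d_1u_j'+d_0u_j\right).$$ The coefficients on the left-hand side that are non-constant (as polynomials in the parameters) are exactly $c_0,c_1,\dots,c_{n-1}$ if $Leak\ne\emptyset$, and $c_1,\dots,c_{n-1}$ if $Leak=\emptyset$. The coefficients on the right-hand side that are non-constant are exactly $d_0,d_1,\dots,d_{n-2}$ if $In=Out$, and $d_0,d_1,\dots,d_{n-L-1}$ if $In\ne Out$, where $L$ is the length of a shortest directed path in $G$ from $j$ to $i$.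
   Context: A linear compartmental model $\mathcal M=(G,In,Out,Leak)$ consists of a finite directed graph $G=(V_G,E_G)$ without multi-edges, compartments $V_G=\{1,\dots,n\}$, and subsets $In,Out,Leak\subseteq V_G$; edge $k\to \ell$ carries parameter $a_{\ell k}$ and each $\ell\in Leak$ carries $a_{0\ell}$, and the parameters are independent indeterminates. The compartmental matrix $A$ has $A_{\ell\ell}=-\sum_{k:\,\ell\to k\in E_G}a_{k\ell}$ (minus $a_{0\ell}$ if $\ell\in Leak$), $A_{\ell k}=a_{\ell k}$ if $k\to\ell\in E_G$, $0$ otherwise. With $B^{p,q}$ denoting removal of row $p$ and column $q$, the input-output equation is $\det(\partial I-A)y_i=(-1)^{i+j}\det((\partial I-A)^{j,i})u_j$, $\partial I$ the diagonal matrix of $d/dt$'s; its coefficients are polynomials in the parameters. *)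

From HB Require Import structures.
From mathcomp Require Import all_boot all_order all_algebra.
From mathcomp Require Import mpoly.
Set Implicit Arguments. Unset Strict Implicit. Unset Printing Implicit Defensive.
Import GRing.Theory.
Local Open Scope ring_scope.

(* Linear compartmental models with N compartments, labelled by 'I_N.
   The graph G is given by its edge relation E : rel 'I_N, where
   E k l means that there is a directed edge k -> l.                  *)

(* Parameters: inl (l,k) stands for a_{l k} (edge k -> l),
   inr l stands for the leak parameter a_{0 l}. *)
Definition param (N : nat) : finType := ('I_N * 'I_N + 'I_N)%type.

Definition paramRing (N : nat) := {mpoly rat[#|param N|]}.

Definition a_edge (N : nat) (l k : 'I_N) : paramRing N :=
  'X_(enum_rank (inl (l, k) : param N)).
Definition a_leak (N : nat) (l : 'I_N) : paramRing N :=
  'X_(enum_rank (inr l : param N)).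

Definition comp_matrix (N : nat) (E : rel 'I_N) (Leak : {set 'I_N}) :
  'M[paramRing N]_N :=
  \matrix_(l, k)
    if l == k then
      - (\sum_(m | E l m) a_edge m l) - (if l \in Leak then a_leak l else 0)
    else if E k l then a_edge l k else 0.

Definition loopless (N : nat) (E : rel 'I_N) := forall k, ~~ E k k.

Definition strongly_connected (N : nat) (E : rel 'I_N) :=
  forall x y, connect E x y.

Definition has_path_of_length (N : nat) (E : rel 'I_N) (x y : 'I_N) (m : nat) :=
  exists p : seq 'I_N, [/\ size p = m, path E x p & last x p = y].

Definition shortest_path_length (N : nat) (E : rel 'I_N) (x y : 'I_N) (L : nat) :=
  has_path_of_length E x y L /\ forall m, has_path_of_length E x y m -> (L <= m)%N.

Definition mconstant (k : nat) (p : {mpoly rat[k]}) := exists c : rat, p = c%:MP.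

(* Left-hand-side polynomial det(dI - A) (coefficients c_k, with d = 'X)
   and right-hand-side polynomial det((dI - A)^{j,i}) (coefficients d_k),
   for a model with n.+1 compartments. *)
Definition io_lhs (n : nat) (E : rel 'I_n.+1) (Leak : {set 'I_n.+1}) :
  {poly paramRing n.+1} := char_poly (comp_matrix E Leak).

Definition io_rhs (n : nat) (E : rel 'I_n.+1) (Leak : {set 'I_n.+1}) (i j : 'I_n.+1) :
  {poly paramRing n.+1} :=
  \det (row' j (col' i (char_poly_mx (comp_matrix E Leak)))).

From HB Require Import structures.
From mathcomp Require Import all_boot all_order all_algebra.
From mathcomp Require Import mpoly fingroup perm zify.
Set Implicit Arguments. Unset Strict Implicit. Unset Printing Implicit Defensive.
Import GRing.Theory Num.Theory.
Local Open Scope ring_scope.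

(* Evaluating the parameters is a ring morphism, so a coefficient is
   non-constant as soon as two evaluations of it differ.  At the zero
   evaluation the two sides become X^(n+1) and (X^n or 0).  Weighting by 1 the
   edges of a breadth-first in-tree towards a root r (and a leak at r) makes
   XI - A triangular for the distance-to-r order, with determinant
   (X + [r in Leak]) (X + 1)^n, and row r of its adjugate is
   ((X + 1)^(n - dist k))_k; their coefficients are nonzero binomials.
   Conversely, the coefficient of X^m in adj(XI - A) is sum_t c_(m+t+1) A^t,
   so its (i, j) entry vanishes unless some path from j to i has length at
   most n - m; without leaks c_0 = +-det A = 0 since the columns of A sum to
   zero; and the diagonal minor is a monic characteristic polynomial. *)

Lemma det_weighted_trig (R : comNzRingType) (N : nat) (M : 'M[R]_N)
    (w : 'I_N -> nat) :
  (forall l k, l != k -> (w k <= w l)%N -> M l k = 0) ->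
  \det M = \prod_k M k k.
Proof.
move=> M_trig; rewrite /determinant (bigD1 1%g) //= [X in _ + X]big1 ?addr0.
  by rewrite odd_perm1 mul1r; apply: eq_bigr => k _; rewrite perm1.
move=> s s_neq1.
case: (boolP [exists k, (s k != k) && (w (s k) <= w k)%N]).
  case/existsP=> k /andP[sk_neq wk_le].
  by rewrite (bigD1 k) //= M_trig ?mul0r ?mulr0 // eq_sym.
move=> /existsPn s_up.
have [k0 sk0] : exists k, s k != k.
  apply/existsP; apply: contraR s_neq1 => /existsPn s_fix.
  by apply/eqP/permP => k; rewrite perm1; apply/eqP/negbNE.
suff : (\sum_k w k < \sum_k w (s k))%N.
  by rewrite (reindex_inj (@perm_inj _ s)) ltnn.
rewrite (bigD1 k0) //= [X in (_ < X)%N](bigD1 k0) //= -addSn leq_add //.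
  by move: (s_up k0); rewrite sk0 /= -ltnNge.
apply: leq_sum => k _; move: (s_up k); case: eqP => [-> //|_] /=.
by rewrite -ltnNge => /ltnW.
Qed.

Lemma row_adj_eq (R : idomainType) (N : nat) (M : 'M[R]_N) (r : 'I_N)
    (z : 'rV[R]_N) :
  \det M != 0 -> z *m M = \det M *: delta_mx 0 r -> row r (\adj M) = z.
Proof.
move=> detM_neq0 zM.
have : (z - row r (\adj M)) *m M *m \adj M = 0.
  by rewrite mulmxBl zM rowE -mulmxA mul_adj_mx mul_mx_scalar subrr mul0mx.
rewrite -mulmxA mul_mx_adj mul_mx_scalar => /eqP.
by rewrite scalemx_eq0 (negbTE detM_neq0) subr_eq0 => /eqP.
Qed.

Lemma det_row'_col'_adj (R : comNzRingType) (N : nat) (C : 'M[R]_N) i j :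
  \det (row' j (col' i C)) = (-1) ^+ (j + i) * \adj C i j.
Proof. by rewrite [\adj C i j]mxE /cofactor signrMK. Qed.

Section AdjugateCharPoly.
Variables (R : comNzRingType) (n : nat) (A : 'M[R]_n.+1).
Let c := char_poly A.
Let S m : 'M[R]_n.+1 := \sum_(t < n.+1) c`_(m + t.+1) *: A ^+ t.

Let S_rec m : S m = (c`_m.+1)%:M + S m.+1 * A.
Proof.
have c_big t : (n.+1 < t)%N -> c`_t = 0.
  by move=> lt_nt; rewrite nth_default // size_char_poly.
rewrite /S mulr_suml.
under [X in _ = _ + X]eq_bigr => t _ do rewrite -scalerAl -exprSr addSnnS.
have -> : (c`_m.+1)%:M = c`_(m + 1) *: A ^+ 0 by rewrite addn1 expr0 scalemx1.
rewrite -(big_ord_recl _ (fun t : 'I_n.+2 => c`_(m + t.+1) *: A ^+ t)).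
by rewrite [RHS]big_ord_recr /= c_big ?scale0r ?addr0 //; lia.
Qed.

Lemma coef_adj_char_poly_mx m :
  \matrix_(x, y) (\adj (char_poly_mx A) x y)`_m
    = \sum_(t < n.+1) (char_poly A)`_(m + t.+1) *: A ^+ t.
Proof.
rewrite -/c -/(S m).
(* Both sides satisfy the recursion S_rec and vanish for large m. *)
have [phi [_ phiZ phiC coef_phi]] := mx_poly_ring_isom R n.
set q := phi (\adj (char_poly_mx A)).
have qE : q * ('X - A%:P) = map_poly scalar_mx c.
  by rewrite -phiZ -mul_adj_mx rmorphM rmorphB phiC phiZ map_polyX.
have -> : \matrix_(x, y) (\adj (char_poly_mx A) x y)`_m = q`_m.
  by apply/matrixP => x y; rewrite mxE coef_phi.
have q_rec k : q`_k = (c`_k.+1)%:M + q`_k.+1 * A.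
  have := congr1 (fun p : {poly 'M[R]_n.+1} => p`_k.+1) qE.
  by rewrite mulrBr coefB coefMX coefMC coef_map /= => <-; rewrite subrK.
have diff_rec k l : q`_k - S k = (q`_(k + l) - S (k + l)) * A ^+ l.
  elim: l => [|l ->]; first by rewrite addn0 mulr1.
  rewrite addnS (q_rec (k + l)) (S_rec (k + l)).
  by rewrite opprD addrACA subrr add0r -mulrBl -mulrA -exprS.
apply/eqP; rewrite -subr_eq0 (diff_rec m (size q + n.+1)%N).
rewrite nth_default; last by rewrite addnCA leq_addr.
rewrite /S big1 ?subr0 ?mul0r // => t _.
by rewrite nth_default ?scale0r // size_char_poly; lia.
Qed.

End AdjugateCharPoly.

Lemma has_path_of_length0 (N : nat) (E : rel 'I_N) x y :
  has_path_of_length E x y 0 <-> x = y.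
Proof. by split=> [[p [/size0nil -> _ <-]] | ->]; last by exists [::]. Qed.

Lemma has_path_of_length_cons (N : nat) (E : rel 'I_N) x z y m :
  E x z -> has_path_of_length E z y m -> has_path_of_length E x y m.+1.
Proof. by move=> Exz [p [<- pz <-]]; exists (z :: p); rewrite /= Exz. Qed.

Lemma has_path_of_lengthS (N : nat) (E : rel 'I_N) x y m :
  has_path_of_length E x y m.+1 -> exists2 z, E x z & has_path_of_length E z y m.
Proof. by case=> [[|z p] [//= [<-] /andP[Exz pz] <-]]; exists z => //; exists p. Qed.

Section WalksOfMatrixPowers.
Variables (R : pzSemiRingType) (N : nat) (E : rel 'I_N) (A : 'M[R]_N).
Hypothesis A_supp : forall x y, x != y -> A x y != 0 -> E y x.

Lemma expmx_neq0_path t x y :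
  (A ^+ t) x y != 0 -> exists2 s, (s <= t)%N & has_path_of_length E y x s.
Proof.
elim: t x y => [|t IHt] x y.
  rewrite expr0 mxE; have [-> _|_] := eqVneq x y; last by rewrite eqxx.
  by exists 0%N => //; apply/has_path_of_length0.
rewrite exprSr -mulmxE mxE => sum_neq0.
have [z Az_neq0] : exists z, (A ^+ t) x z * A z y != 0.
  apply/existsP; apply: contraNT sum_neq0 => /existsPn all0.
  by rewrite big1 // => z _; apply/eqP/negbNE/all0.
have Atxz : (A ^+ t) x z != 0 by apply: contraNneq Az_neq0 => ->; rewrite mul0r.
have Azy : A z y != 0 by apply: contraNneq Az_neq0 => ->; rewrite mulr0.
have [s le_st Pzx] := IHt x z Atxz.
have [<-|neq_zy] := eqVneq z y; first by exists s => //; apply: leqW.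
by exists s.+1 => //; apply: has_path_of_length_cons (A_supp neq_zy Azy) Pzx.
Qed.

End WalksOfMatrixPowers.

Lemma adj_char_poly_mx_coef_path (R : comNzRingType) (n : nat) (E : rel 'I_n.+1)
    (A : 'M[R]_n.+1) :
  (forall x y, x != y -> A x y != 0 -> E y x) ->
  forall m x y, (\adj (char_poly_mx A) x y)`_m != 0 ->
  exists2 s, (s + m <= n)%N & has_path_of_length E y x s.
Proof.
move=> A_supp m x y; have /matrixP/(_ x y) := coef_adj_char_poly_mx A m.
rewrite mxE => -> /eqP; rewrite summxE => /eqP sum_neq0.
have [t] : exists t : 'I_n.+1, ((char_poly A)`_(m + t.+1) *: A ^+ t) x y != 0.
  apply/existsP; apply: contraNT sum_neq0 => /existsPn all0.
  by rewrite big1 // => t _; apply/eqP/negbNE/all0.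
rewrite mxE => cA_neq0.
have c_neq0 : (char_poly A)`_(m + t.+1) != 0.
  by apply: contraNneq cA_neq0 => ->; rewrite mul0r.
have At_neq0 : (A ^+ t) x y != 0 by apply: contraNneq cA_neq0 => ->; rewrite mulr0.
have : (m + t.+1 < size (char_poly A))%N.
  by rewrite ltnNge; apply: contra c_neq0 => /(nth_default 0) ->.
have [s le_st Pyx] := expmx_neq0_path A_supp At_neq0.
by rewrite size_char_poly => lt_mt; exists s => //; lia.
Qed.

Definition has_path_of_lengthb (N : nat) (E : rel 'I_N) x y m :=
  [exists p : m.-tuple 'I_N, path E x p && (last x p == y)].

Lemma has_path_of_lengthP (N : nat) (E : rel 'I_N) x y m :
  reflect (has_path_of_length E x y m) (has_path_of_lengthb E x y m).
Proof.
apply: (iffP existsP) => [[p /andP[Pp /eqP <-]] | [p [<- Pp <-]]].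
  by exists p; rewrite size_tuple.
by exists (in_tuple p); rewrite Pp eqxx.
Qed.

Section Distance.
Variables (N : nat) (E : rel 'I_N) (r : 'I_N).
Hypothesis E_sc : strongly_connected E.

Let exists_path_to x : exists m, has_path_of_lengthb E x r m.
Proof.
have /connectP[p Pp ->] := E_sc x r.
by exists (size p); apply/has_path_of_lengthP; exists p.
Qed.

Definition dist x := ex_minn (exists_path_to x).

Lemma dist_path x : has_path_of_length E x r (dist x).
Proof. by rewrite /dist; case: ex_minnP => m /has_path_of_lengthP. Qed.

Lemma dist_min x m : has_path_of_length E x r m -> (dist x <= m)%N.
Proof.
by rewrite /dist; case: ex_minnP => m0 _ min_m0 /has_path_of_lengthP /min_m0.
Qed.

Lemma dist_shortest x L : shortest_path_length E x r L -> dist x = L.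
Proof.
by case=> PL L_min; apply/eqP; rewrite eqn_leq dist_min ?L_min //; apply: dist_path.
Qed.

Lemma dist_eq0 x : (dist x == 0%N) = (x == r).
Proof.
apply/eqP/eqP => [d0 | ->].
  by move: (dist_path x); rewrite d0 => /has_path_of_length0.
by apply/eqP; rewrite -leqn0 dist_min //; apply/has_path_of_length0.
Qed.

Lemma dist_lt x : (dist x < N)%N.
Proof.
have /connectP[p Pp r_last] := E_sc x r.
case: (shortenP Pp) r_last => q Pq uniq_xq _ r_last.
apply: leq_ltn_trans (dist_min (_ : has_path_of_length E x r (size q))) _.
  by exists q.
by have := max_card (mem (x :: q)); rewrite (card_uniqP uniq_xq) card_ord.
Qed.

Definition parent x := odflt x [pick z | E x z && (dist z < dist x)%N].

Lemma parent_spec x : x != r -> E x (parent x) /\ dist (parent x) = (dist x).-1.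
Proof.
rewrite -dist_eq0 /parent; have := dist_path x.
case def_dx: (dist x) => [|m] // /has_path_of_lengthS[z Exz Pz] _.
case: pickP => [y /andP[Exy lt_y] | /(_ z)]; last by rewrite Exz ltnS dist_min.
split=> //; apply/eqP; rewrite eqn_leq -ltnS lt_y -ltnS -def_dx.
exact/dist_min/has_path_of_length_cons/dist_path.
Qed.

End Distance.

Section TreeMatrix.
Variables (R : idomainType) (n : nat) (E : rel 'I_n.+1) (r : 'I_n.+1).
Hypothesis E_sc : strongly_connected E.
Local Notation d := (dist r E_sc).
Local Notation p := (parent r E_sc).

Definition tree_mx (c : R) : 'M[R]_n.+1 :=
  \matrix_(l, k) if l == k then (if l == r then - c else -1)
                 else ((k != r) && (l == p k))%:R.

Local Notation M c := (char_poly_mx (tree_mx c)).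

Lemma char_poly_mx_tree_mx c l k :
  M c l k =
    if l == k then 'X + (if l == r then c else 1)%:P
    else - ((k != r) && (l == p k))%:R%:P.
Proof.
rewrite !mxE; case: eqP => [->|_]; last by rewrite sub0r.
by case: (k == r); rewrite mulr1n rmorphN opprK.
Qed.

Lemma char_poly_tree_mx c : char_poly (tree_mx c) = ('X + c%:P) * ('X + 1) ^+ n.
Proof.
rewrite /char_poly (@det_weighted_trig _ _ _ d) => [|l k l_neq_k le_dkl].
  rewrite (bigD1 r) //= char_poly_mx_tree_mx !eqxx; congr (_ * _).
  under eq_bigr => k k_neq_r do rewrite char_poly_mx_tree_mx eqxx (negbTE k_neq_r).
  by rewrite prodr_const cardC1 card_ord.
rewrite char_poly_mx_tree_mx (negbTE l_neq_k).
have [/= k_neq_r|] := boolP (k != r); last by rewrite oppr0.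
case: eqP le_dkl => [->|]; last by rewrite oppr0.
have [_ ->] := parent_spec E_sc k_neq_r; rewrite -(dist_eq0 r E_sc) in k_neq_r.
by case: (d k) k_neq_r => // m; rewrite ltnn.
Qed.

Lemma adj_char_poly_mx_tree_mx c v :
  \adj (M c) r v = ('X + 1) ^+ (n - d v).
Proof.
(* Row r of the adjugate is the unique solution of z *m M c = \det (M c) *: 'e_r;
   column k != r of M c is 'X + 1 at k and -1 at the parent of k, so it
   is solved by z_k = ('X + 1) ^+ (n - d k). *)
pose z := \row_k ('X + 1 : {poly R}) ^+ (n - d k).
have detM : \det (M c) = ('X + c%:P) * ('X + 1) ^+ n := char_poly_tree_mx c.
have detM_neq0 : \det (M c) != 0.
  by rewrite detM mulf_neq0 ?expf_neq0 // -?polyC1 monic_neq0 ?monicXaddC.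
suff zM : z *m M c = \det (M c) *: delta_mx 0 r.
  by have /rowP/(_ v) := row_adj_eq detM_neq0 zM; rewrite !mxE.
have d_r : d r = 0%N by apply/eqP; rewrite dist_eq0.
apply/rowP => k; rewrite !mxE.
have [-> | k_neq_r] := eqVneq k r.
  rewrite (bigD1 r) //= big1 => [|l l_neq_r]; last first.
    by rewrite (char_poly_mx_tree_mx c l r) (negbTE l_neq_r) eqxx oppr0 mulr0.
  by rewrite addr0 mulr1 (char_poly_mx_tree_mx c r r) !eqxx detM mxE d_r subn0 mulrC.
have [_ d_p] := parent_spec E_sc k_neq_r.
have p_neq_k : p k != k.
  apply: contraNneq k_neq_r => pk_eq; rewrite -(dist_eq0 r E_sc).
  by move: d_p; rewrite pk_eq; lia.
rewrite mulr0 (bigD1 k) //= (bigD1 (p k)) ?p_neq_k //=.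
rewrite big1 => [|l /andP[l_neq_k l_neq_p]]; last first.
  rewrite (char_poly_mx_tree_mx c l k) (negbTE l_neq_k) (negbTE l_neq_p).
  by rewrite andbF oppr0 mulr0.
rewrite addr0 (char_poly_mx_tree_mx c k k) (char_poly_mx_tree_mx c (p k) k).
rewrite eqxx (negbTE k_neq_r) (negbTE p_neq_k) /= eqxx !mxE d_p mulrN1 polyC1.
have := dist_lt r E_sc k; rewrite -(dist_eq0 r E_sc) in k_neq_r.
case: (d k) k_neq_r => // m _; rewrite ltnS => lt_mn.
by rewrite -(subnSK lt_mn) exprSr subrr.
Qed.

End TreeMatrix.

Definition comp_mx (R : pzRingType) (N : nat) (E : rel 'I_N) (Leak : {set 'I_N})
    (ae : 'I_N -> 'I_N -> R) (al : 'I_N -> R) : 'M[R]_N :=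
  \matrix_(l, k)
    if l == k then - (\sum_(m | E l m) ae m l) - (if l \in Leak then al l else 0)
    else if E k l then ae l k else 0.

Section CompartmentalMatrix.
Variables (R : pzRingType) (N : nat) (E : rel 'I_N) (Leak : {set 'I_N}).
Implicit Types (ae : 'I_N -> 'I_N -> R) (al : 'I_N -> R).

Lemma comp_mx_supp ae al l k : l != k -> comp_mx E Leak ae al l k != 0 -> E k l.
Proof.
by move=> l_neq_k; rewrite mxE (negbTE l_neq_k); case: (E k l); rewrite ?eqxx.
Qed.

Lemma comp_mx0 : comp_mx E Leak (fun _ _ => 0) (fun _ => 0) = 0 :> 'M[R]_N.
Proof.
apply/matrixP => l k; rewrite !mxE big1 // oppr0 sub0r if_same.
by case: eqP; rewrite ?oppr0 ?if_same.
Qed.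

Lemma colsums_comp_mx_set0 ae al :
  loopless E -> (const_mx 1 : 'rV[R]_N) *m comp_mx E set0 ae al = 0.
Proof.
move=> E_loopless; apply/rowP => k; rewrite !mxE (bigD1 k) //= !mxE eqxx in_set0.
rewrite subr0 mul1r (eq_bigr (fun l => if E k l then ae l k else 0)) => [|l l_neq_k].
  rewrite -big_mkcondr /= [X in _ + X](eq_bigl (E k)) ?addNr // => l.
  by case: eqVneq => [->|] //=; rewrite (negbTE (E_loopless k)).
by rewrite !mxE mul1r (negbTE l_neq_k).
Qed.

End CompartmentalMatrix.

Lemma comp_mx_tree (R : idomainType) (n : nat) (E : rel 'I_n.+1) (Leak : {set 'I_n.+1})
    (r : 'I_n.+1) (E_sc : strongly_connected E) :
  comp_mx E Leak (fun l k => ((k != r) && (l == parent r E_sc k))%:R)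
    (fun l => (l == r)%:R) = tree_mx r E_sc (r \in Leak)%:R :> 'M[R]_n.+1.
Proof.
apply/matrixP => l k; rewrite !mxE; case: (eqVneq l k) => [lk | l_neq_k]; first subst k.
  have [-> | l_neq_r] := eqVneq l r.
    by rewrite big1 ?eqxx ?oppr0 ?sub0r //; case: (r \in Leak).
  have [E_lp _] := parent_spec E_sc l_neq_r.
  rewrite (bigD1 (parent r E_sc l)) //= eqxx big1 => [|m /andP[_ /negbTE->]] //.
  by rewrite addr0 if_same subr0.
case: ifP => // E_kl; case: eqVneq => [k_eq_r | k_neq_r] //=.
by case: eqP => // l_eq; have [+ _] := parent_spec E_sc k_neq_r; rewrite -l_eq E_kl.
Qed.

Definition param_val (N : nat) (ae : 'I_N -> 'I_N -> rat) (al : 'I_N -> rat)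
    (x : 'I_#|param N|) : rat :=
  match enum_val x with inl (l, k) => ae l k | inr l => al l end.

Lemma comp_matrix_meval (N : nat) (E : rel 'I_N) (Leak : {set 'I_N}) ae al :
  map_mx (meval (param_val ae al)) (comp_matrix E Leak) = comp_mx E Leak ae al.
Proof.
have edgeE l k : (a_edge l k).@[param_val ae al] = ae l k.
  by rewrite mevalXU /param_val enum_rankK.
have leakE l : (a_leak l).@[param_val ae al] = al l.
  by rewrite mevalXU /param_val enum_rankK.
apply/matrixP => l k; rewrite !mxE; case: eqP => _.
  rewrite rmorphB rmorphN rmorph_sum /=; under eq_bigr do rewrite edgeE.
  by case: (l \in Leak); rewrite ?leakE ?rmorph0.
by case: (E k l); rewrite ?edgeE ?rmorph0.
Qed.

Lemma mconstant_coef_meval (m : nat) (P : {poly {mpoly rat[m]}}) k v w :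
  mconstant P`_k -> (map_poly (meval v) P)`_k = (map_poly (meval w) P)`_k.
Proof. by rewrite !coef_map /= => -[c ->]; rewrite !mevalC. Qed.

Lemma coef_signM (R : nzRingType) s (p : {poly R}) k :
  ((-1) ^+ s * p)`_k = (-1) ^+ s * p`_k.
Proof. by rewrite -(rmorph_sign polyC) coefCM. Qed.

Lemma coef_XaddC1_expr (R : nzRingType) m k :
  (('X + 1 : {poly R}) ^+ m)`_k = 'C(m, k)%:R.
Proof.
rewrite exprD1n coef_sum; under eq_bigr do rewrite coefMn coefXn.
have [lt_mk | le_km] := ltnP m k.
  rewrite bin_small // big1 // => i _.
  by rewrite gtn_eqF ?mul0rn // (leq_trans (ltn_ord i)).
rewrite (bigD1 (Ordinal (le_km : (k < m.+1)%N))) //= eqxx big1 ?addr0 // => i.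
by rewrite -val_eqE /= eq_sym => /negbTE->; rewrite mul0rn.
Qed.

Lemma coef_XaddC1_expr_neq0 (R : numDomainType) m k :
  (k <= m)%N -> (('X + 1 : {poly R}) ^+ m)`_k != 0.
Proof. by rewrite coef_XaddC1_expr pnatr_eq0 -lt0n bin_gt0. Qed.

Section InputOutputEquation.
Variables (n : nat) (E : rel 'I_n.+1) (Leak : {set 'I_n.+1}).
Hypotheses (E_loopless : loopless E) (E_sc : strongly_connected E).

Let zero_val := param_val (fun _ _ : 'I_n.+1 => 0) (fun _ => 0).
Let tree_val r :=
  param_val (fun l k => ((k != r) && (l == parent r E_sc k))%:R) (fun l => (l == r)%:R).

Lemma io_lhs_meval ae al :
  map_poly (meval (param_val ae al)) (io_lhs E Leak) = char_poly (comp_mx E Leak ae al).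
Proof. by rewrite map_char_poly comp_matrix_meval. Qed.

Lemma io_rhsE i j :
  io_rhs E Leak i j = (-1) ^+ (j + i) * \adj (char_poly_mx (comp_matrix E Leak)) i j.
Proof. exact: det_row'_col'_adj. Qed.

Lemma io_rhs_meval ae al i j :
  map_poly (meval (param_val ae al)) (io_rhs E Leak i j) =
    (-1) ^+ (j + i) * \adj (char_poly_mx (comp_mx E Leak ae al)) i j.
Proof.
have /matrixP/(_ i j) :=
  map_mx_adj (map_poly (meval (param_val ae al))) (char_poly_mx (comp_matrix E Leak)).
by rewrite mxE map_char_poly_mx comp_matrix_meval io_rhsE rmorphM rmorph_sign => <-.
Qed.

Lemma io_lhs_at_zero : map_poly (meval zero_val) (io_lhs E Leak) = 'X ^+ n.+1.
Proof.
by rewrite io_lhs_meval comp_mx0 /char_poly /char_poly_mx map_mx0 subr0 det_scalar.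
Qed.

Lemma io_lhs_at_tree r :
  map_poly (meval (tree_val r)) (io_lhs E Leak) =
    ('X + (r \in Leak)%:R%:P) * ('X + 1) ^+ n.
Proof. by rewrite io_lhs_meval comp_mx_tree char_poly_tree_mx. Qed.

Lemma io_rhs_at_zero i j :
  map_poly (meval zero_val) (io_rhs E Leak i j) = (-1) ^+ (j + i) * ('X^n *+ (i == j)).
Proof.
rewrite io_rhs_meval comp_mx0 /char_poly_mx map_mx0 subr0 -scalemx1 adjZ adj1 /=.
by rewrite !mxE mulr_natr.
Qed.

Lemma io_rhs_at_tree i j :
  map_poly (meval (tree_val i)) (io_rhs E Leak i j) =
    (-1) ^+ (j + i) * ('X + 1) ^+ (n - dist i E_sc j).
Proof. by rewrite io_rhs_meval comp_mx_tree adj_char_poly_mx_tree_mx. Qed.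

Lemma io_lhs_coef_not_mconstant k : (k < n.+1)%N ->
  ~ mconstant (io_lhs E Leak)`_k <-> Leak != set0 \/ (0 < k)%N.
Proof.
move=> lt_kn; split=> [nonconst | nonconst_cond].
  have [Leak0 | ] := eqVneq Leak set0; [right | by left].
  rewrite lt0n; apply: contra_notN nonconst => /eqP ->.
  exists 0; rewrite mpolyC0 char_poly_det.
  suff /eqP -> : \det (comp_matrix E Leak) == 0 by rewrite mulr0.
  apply/det0P; exists (const_mx 1); last by rewrite Leak0 colsums_comp_mx_set0.
  by apply/eqP => /rowP/(_ ord0)/eqP; rewrite !mxE oner_eq0.
case: (set_0Vmem Leak) => [Leak0 | [r r_in]].
  have {nonconst_cond} : (0 < k)%N by move: nonconst_cond; rewrite Leak0 eqxx => -[].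
  case: k lt_kn => // k lt_kn _.
  move=> /(mconstant_coef_meval zero_val (tree_val ord0))/eqP; apply/negP.
  rewrite io_lhs_at_zero io_lhs_at_tree Leak0 in_set0 polyC0 addr0 coefXn coefXM /=.
  by rewrite (ltn_eqF lt_kn) eq_sym coef_XaddC1_expr_neq0 //; lia.
move=> /(mconstant_coef_meval zero_val (tree_val r))/eqP; apply/negP.
rewrite io_lhs_at_zero io_lhs_at_tree r_in polyC1 -exprS coefXn ltn_eqF //.
by rewrite eq_sym coef_XaddC1_expr_neq0 // ltnW.
Qed.

Lemma io_rhs_diag_coef_not_mconstant i k : (k < n.+1)%N ->
  ~ mconstant (io_rhs E Leak i i)`_k <-> (k + 2 <= n.+1)%N.
Proof.
move=> lt_kn; split=> [nonconst | lt_k].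
  rewrite leqNgt; apply: contra_notN nonconst => ge_k.
  have -> : k = n by lia.
  exists 1; rewrite mpolyC1 /io_rhs row'_col'_char_poly_mx.
  have := char_poly_monic (row' i (col' i (comp_matrix E Leak))).
  by rewrite monicE /lead_coef size_char_poly => /eqP.
move=> /(mconstant_coef_meval zero_val (tree_val i))/eqP; apply/negP.
rewrite io_rhs_at_zero io_rhs_at_tree !coef_signM eqxx mulr1n coefXn.
have /eqP -> : dist i E_sc i == 0%N by rewrite dist_eq0.
rewrite subn0 (_ : (k == n) = false) ?mulr0; last by apply/eqP; lia.
by rewrite eq_sym mulf_neq0 ?signr_eq0 ?coef_XaddC1_expr_neq0 //; lia.
Qed.

Lemma io_rhs_offdiag_coef_not_mconstant i j L : i <> j ->
  shortest_path_length E j i L -> forall k, (k < n.+1)%N ->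
  ~ mconstant (io_rhs E Leak i j)`_k <-> (k + L + 1 <= n.+1)%N.
Proof.
move=> /eqP i_neq_j /(dist_shortest E_sc) dist_j k lt_kn.
split=> [nonconst | le_kL].
  rewrite leqNgt; apply: contra_notN nonconst => lt_nkL.
  exists 0; rewrite mpolyC0 io_rhsE coef_signM.
  set a := _`_k; have [-> | a_neq0] := eqVneq a 0; first by rewrite mulr0.
  have [s le_skn Pji] :=
    adj_char_poly_mx_coef_path (@comp_mx_supp _ _ E Leak _ _) a_neq0.
  have := dist_min E_sc Pji; lia.
move=> /(mconstant_coef_meval zero_val (tree_val i))/eqP; apply/negP.
rewrite io_rhs_at_zero io_rhs_at_tree !coef_signM (negbTE i_neq_j) mulr0n coef0 mulr0.
by rewrite eq_sym mulf_neq0 ?signr_eq0 ?coef_XaddC1_expr_neq0 //; lia.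
Qed.

End InputOutputEquation.

Unset Implicit Arguments.
Set Strict Implicit.

Theorem corollary3p2 (n : nat) (E : rel 'I_n.+1) (Leak : {set 'I_n.+1})
    (i j : 'I_n.+1) :
  loopless E -> strongly_connected E ->
  (forall k : nat, (k < n.+1)%N ->
     ~ mconstant (io_lhs E Leak)`_k <-> (Leak != set0 \/ (0 < k)%N)) /\
  (i = j -> forall k : nat, (k < n.+1)%N ->
     ~ mconstant (io_rhs E Leak i j)`_k <-> (k + 2 <= n.+1)%N) /\
  (forall L : nat, i <> j -> shortest_path_length E j i L ->
     forall k : nat, (k < n.+1)%N ->
     ~ mconstant (io_rhs E Leak i j)`_k <-> (k + L + 1 <= n.+1)%N).
Proof.
move=> E_loopless E_sc; split; [|split].
- exact: (io_lhs_coef_not_mconstant Leak E_loopless E_sc).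
- by move=> <-; exact: (io_rhs_diag_coef_not_mconstant Leak E_sc).
- exact: (io_rhs_offdiag_coef_not_mconstant Leak E_sc).
Qed.
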